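(* For every $l\in w_{1+\infty}$, with $\tilde l=\frac12(l-\iota(l))$ its anti-symmetrization, one has $[\hat l^B,\phi(z)]=[\hat{\tilde l}^B,\phi(z)]$.
   Context: Neutral fermions $\{\phi_i\}_{i\in\mathbb{Z}}$ satisfy $[\phi_i,\phi_j]_+=(-1)^i\delta_{i+j,0}$, acting on the Fock space generated from a vacuum $|0\rangle$ with $\phi_i|0\rangle=0$ for $i<0$; $\langle0|\phi_i=0$ for $i>0$, $\langle0|0\rangle=1$, $\langle0|\phi_0|0\rangle=0$. $\phi(z)=\sum_i\phi_iz^i$; $:\!\phi_i\phi_j\!:\,=\phi_i\phi_j-\langle0|\phi_i\phi_j|0\rangle$. $w_{1+\infty}=\mathrm{span}_{\mathbb{C}}\{z^i\partial_z^j\}$ with involution $\iota(z^k(z\partial_z)^m)=(-z\partial_z)^m(-z)^k$. The B-type realization is $\hat l^B=\frac12\mathrm{Res}_w\,w^{-1}:\!\phi(z)\,(l_w\cdot\phi(w))\!:\big|_{z=-w}$. *)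

From HB Require Import structures.
From mathcomp Require Import all_boot all_order all_algebra.
From Stdlib Require Import ClassicalEpsilon.

Set Implicit Arguments.
Unset Strict Implicit.
Unset Printing Implicit Defensive.

Import Order.TTheory GRing.Theory Num.Theory.
Local Open Scope ring_scope.

Definition sgnz (R : numClosedFieldType) (i : int) : R := (-1) ^+ `|i|%N.

(* Elements of w_{1+oo}: a finite list of pairs (k, p) standing for the
   operator  sum_{(k,p)} z^k p(z d/dz),  p a polynomial.  Every element
   sum c_{k,m} z^k (z d_z)^m of w_{1+oo} is of this form. *)
Definition wop (R : numClosedFieldType) := seq (int * {poly R}).

(* the involution iota(z^k (z d_z)^m) = (-z d_z)^m (-z)^k
   = (-1)^k z^k (-(z d_z) - k)^m, extended linearly *)
Definition iotaW (R : numClosedFieldType) (l : wop R) : wop R :=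
  [seq (e.1, sgnz R e.1 *: (e.2 \Po (- 'X - (e.1)%:~R%:P))) | e <- l].

Definition antisym (R : numClosedFieldType) (l : wop R) : wop R :=
  [seq (e.1, 2^-1 *: e.2) | e <- l] ++ [seq (e.1, - 2^-1 *: e.2) | e <- iotaW l].

Section Fermions.
Variable R : numClosedFieldType.
Variable V : lmodType R.
Variable phi : int -> {linear V -> V}.
Variable bra : V -> R.
Variable vac : V.

(* the Fock space is generated from the vacuum by the phi_i *)
Inductive fock_gen : V -> Prop :=
  | fg_vac : fock_gen vac
  | fg_phi i v : fock_gen v -> fock_gen (phi i v)
  | fg_add u v : fock_gen u -> fock_gen v -> fock_gen (u + v)
  | fg_scale (a : R) v : fock_gen v -> fock_gen (a *: v).

Definition vev (i j : int) : R := bra (phi i (phi j vac)).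

Definition nord (i j : int) (v : V) : V := phi i (phi j v) - vev i j *: v.

(* l_w . phi(w) = sum_j sum_{(k,p)} p(j) phi_j w^{j+k}; phi(z)|_{z=-w} =
   sum_i (-1)^i phi_i w^i; Res_w w^{-1} picks the coefficient of w^0, i.e.
   j = -i-k.  Truncation of the i-sum to -N <= i <= N: *)
Definition hatB_trunc (l : wop R) (N : nat) (v : V) : V :=
  2^-1 *: \sum_(t < (2 * N).+1)
     \sum_(e <- l) (sgnz R (t%:Z - N%:Z) * (e.2).[(- (t%:Z - N%:Z) - e.1)%:~R])
                    *: nord (t%:Z - N%:Z) (- (t%:Z - N%:Z) - e.1) v.

(* hat l^B v : the (eventually stationary) value of the infinite sum *)
Definition hatB (l : wop R) (v : V) : V :=
  epsilon (inhabits 0)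
    (fun w => exists N0 : nat, forall N : nat, (N0 <= N)%N -> hatB_trunc l N v = w).

End Fermions.

From HB Require Import structures.
From mathcomp Require Import all_boot all_order all_algebra zify ring.
From Stdlib Require Import ClassicalEpsilon FunctionalExtensionality PropExtensionality.
Import Order.TTheory GRing.Theory Num.Theory.
Local Open Scope ring_scope.

Set Implicit Arguments.
Unset Strict Implicit.

(* The B-type realization annihilates the iota-symmetric part of l, so in fact
   hat l^B = hat l~^B as operators on the Fock space, and the commutators with
   phi(z) agree a fortiori.  The term of z^k p(z d_z) paired with phi_i is
   (-1)^i p(-i-k) :phi_i phi_{-i-k}:, and since :phi_a phi_b: = - :phi_b phi_a:,
   the term of iota(z^k p(z d_z)) paired with phi_i is minus the term of
   z^k p(z d_z) paired with phi_{-i-k}.  On a given vector only finitely many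
   terms are nonzero, so over a large enough symmetric window of indices the
   truncated sum for iota(l) is minus the one for l. *)

Lemma sgnzN (R : numClosedFieldType) (a : int) : sgnz R (- a) = sgnz R a.
Proof. by rewrite /sgnz abszN. Qed.

Lemma sgnzD (R : numClosedFieldType) (a b : int) :
  sgnz R (a + b) = sgnz R a * sgnz R b.
Proof.
rewrite /sgnz -exprD.
(* |a| + |b| and |a + b| have the same parity. *)
have -> : (absz a + absz b = absz (a + b)%R + 2 * ((absz a + absz b - absz (a + b)%R) %/ 2))%N
  by lia.
by rewrite exprD exprM sqrrN !expr1n mulr1.
Qed.

Definition window (N : nat) : seq int := [seq t%:Z - N%:Z | t <- iota 0 (2 * N).+1].

Lemma mem_window N i : (i \in window N) = (- N%:Z <= i <= N%:Z).
Proof.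
apply/mapP/andP => [[t]|[lo hi]].
  by rewrite mem_iota => /andP[_ ht] ->; split; lia.
exists (absz (i + N%:Z)); last by lia.
by rewrite mem_iota; apply/andP; split; lia.
Qed.

Lemma window_uniq N : uniq (window N).
Proof. by rewrite map_inj_uniq ?iota_uniq // => a b /addIr; lia. Qed.

Lemma sub_window M N : (M <= N)%N -> {subset window M <= window N}.
Proof. by move=> le_MN i; rewrite !mem_window; lia. Qed.

Lemma big_uniq_support (I : eqType) (M : nmodType) (s S : seq I) (f : I -> M) :
  uniq s -> uniq S -> {subset S <= s} -> (forall i, i \notin S -> f i = 0) ->
  \sum_(i <- s) f i = \sum_(i <- S) f i.
Proof.
move=> s_uniq S_uniq sub_Ss f0.
rewrite (bigID [in S]) /= [X in _ + X]big1 ?addr0 // -big_filter.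
apply/perm_big/uniq_perm; rewrite ?filter_uniq // => x.
by rewrite mem_filter andb_idr // => /sub_Ss.
Qed.

Lemma sum_window_reflect (M : nmodType) (f : int -> M) (K N : nat) (k : int) :
  (forall i, i \notin window K -> f i = 0) -> (K + `|k| <= N)%N ->
  \sum_(i <- window N) f (- i - k) = \sum_(i <- window N) f i.
Proof.
move=> f0 le_KN.
have reflect_inj : injective (fun i : int => - i - k) by move=> a b /addIr/oppr_inj.
rewrite -(big_map (fun i => - i - k) xpredT f).
rewrite !(big_uniq_support (S := window K)) ?window_uniq //.
- by apply: sub_window; lia.
- by rewrite map_inj_uniq ?window_uniq.
- move=> j; rewrite mem_window => j_in; apply/mapP; exists (- j - k); last by lia.
  by rewrite mem_window; lia.
Qed.

Section BRealization.
Variables (R : numClosedFieldType) (V : lmodType R).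
Variables (phi : int -> {linear V -> V}) (bra : V -> R) (vac : V).
Hypothesis phi_anticomm : forall (i j : int) (v : V),
  phi i (phi j v) + phi j (phi i v) = (if i + j == 0 then sgnz R i else 0) *: v.
Hypothesis phi_vac : forall i : int, i < 0 -> phi i vac = 0.
Hypothesis bra_linear : forall (a : R) (u v : V), bra (a *: u + v) = a * bra u + bra v.
Hypothesis bra_phi : forall (i : int) (v : V), 0 < i -> bra (phi i v) = 0.
Hypothesis bra_vac : bra vac = 1.

Local Notation nord := (nord phi bra vac).
Local Notation vev := (vev phi bra vac).

Lemma bra0 : bra 0 = 0.
Proof.
have := bra_linear 1 0 0; rewrite scaler0 addr0 mul1r => bra0_twice.
by apply: (@addrI _ (bra 0)); rewrite addr0 -bra0_twice.
Qed.

Lemma vevC i j : vev j i + vev i j = if j + i == 0 then sgnz R j else 0.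
Proof.
rewrite /vev -[bra (phi j _)]mul1r -bra_linear scale1r phi_anticomm.
by rewrite -[_ *: vac]addr0 bra_linear bra0 bra_vac mulr1 addr0.
Qed.

Lemma nordC i j v : nord j i v = - nord i j v.
Proof.
apply/eqP; rewrite -subr_eq0 opprK /nord addrACA phi_anticomm -opprD -scalerDl.
by rewrite vevC subrr.
Qed.

Lemma nord_eq0 a b v : 0 < a -> phi b v = 0 -> nord a b v = 0.
Proof.
by move=> a_gt0 phi_bv; rewrite /nord /vev phi_bv linear0 bra_phi // scale0r subr0.
Qed.

Lemma fock_gen_phi_eq0 v : fock_gen phi vac v ->
  exists M : nat, forall j : int, j <= - M%:Z -> phi j v = 0.
Proof.
elim=> {v} [|i v _ [M HM]|u v _ [M1 H1] _ [M2 H2]|a v _ [M HM]].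
- by exists 1%N => j j_le; apply: phi_vac; lia.
- exists (M + absz i + 1)%N => j j_le.
  have := phi_anticomm j i v; rewrite (HM j); last by lia.
  rewrite linear0 addr0 => ->.
  by rewrite ifF ?scale0r //; apply/negP => /eqP; lia.
- by exists (M1 + M2)%N => j j_le; rewrite linearD H1 ?H2 ?addr0 //; lia.
- by exists M => j j_le; rewrite linearZ /= HM // scaler0.
Qed.

Definition hatB_mode (v : V) (k : int) (p : {poly R}) (i : int) : V :=
  (sgnz R i * p.[(- i - k)%:~R]) *: nord i (- i - k) v.

Lemma hatB_truncE l N v :
  hatB_trunc phi bra vac l N v =
  2^-1 *: \sum_(e <- l) \sum_(i <- window N) hatB_mode v e.1 e.2 i.
Proof.
rewrite /hatB_trunc exchange_big /=; congr (_ *: _); apply: eq_bigr => e _.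
rewrite big_map -(big_mkord xpredT (fun t => hatB_mode v e.1 e.2 (t%:Z - N%:Z))).
by rewrite /index_iota subn0.
Qed.

Lemma hatB_modeZ v k c p i : hatB_mode v k (c *: p) i = c *: hatB_mode v k p i.
Proof. by rewrite /hatB_mode hornerZ scalerA mulrCA. Qed.

Lemma hatB_mode_iota v k p i :
  hatB_mode v k (sgnz R k *: (p \Po (- 'X - k%:~R%:P))) i = - hatB_mode v k p (- i - k).
Proof.
rewrite /hatB_mode hornerZ horner_comp !hornerE.
have -> : - (- i - k)%:~R - k%:~R = i%:~R :> R by rewrite !intrB !intrN; ring.
have -> : - (- i - k) - k = i by ring.
have sgn_ik : sgnz R (- i - k) = sgnz R i * sgnz R k.
  by rewrite -sgnzD -(sgnzN R (i + k)) opprD.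
by rewrite nordC scalerN sgn_ik.
Qed.

Lemma hatB_mode_eq0 v (M : nat) k p i :
  (forall j : int, j <= - M%:Z -> phi j v = 0) ->
  i \notin window (M + `|k|) -> hatB_mode v k p i = 0.
Proof.
move=> phi_v; rewrite mem_window negb_and -!ltNge /hatB_mode => /orP[i_lt|i_gt].
  by rewrite nordC nord_eq0 ?oppr0 ?scaler0 //; [lia | apply: phi_v; lia].
by rewrite nord_eq0 ?scaler0 //; [lia | apply: phi_v; lia].
Qed.

Lemma sum_hatB_mode_iota v (M : nat) k p N :
  (forall j : int, j <= - M%:Z -> phi j v = 0) -> (M + 2 * `|k| <= N)%N ->
  \sum_(i <- window N) hatB_mode v k (sgnz R k *: (p \Po (- 'X - k%:~R%:P))) i
  = - \sum_(i <- window N) hatB_mode v k p i.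
Proof.
move=> phi_v le_N; under eq_bigr do rewrite hatB_mode_iota.
rewrite sumrN (sum_window_reflect (K := (M + `|k|)%N)) //; last by lia.
by move=> i; apply: hatB_mode_eq0.
Qed.

Lemma hatB_trunc_antisym v (M : nat) l N :
  (forall j : int, j <= - M%:Z -> phi j v = 0) ->
  (M + 2 * \max_(e <- l) `|e.1| <= N)%N ->
  hatB_trunc phi bra vac (antisym l) N v = hatB_trunc phi bra vac l N v.
Proof.
move=> phi_v le_N; rewrite !hatB_truncE /antisym big_cat /= !big_map -big_split /=.
congr (_ *: _); apply: eq_big_seq => e e_l.
under eq_bigr do rewrite hatB_modeZ; under [X in _ + X]eq_bigr do rewrite hatB_modeZ.
rewrite -!scaler_sumr (sum_hatB_mode_iota _ phi_v); last first.
  by apply: leq_trans le_N; rewrite leq_add2l leq_pmul2l //; apply: leq_bigmax_seq.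
have halves : 2^-1 + 2^-1 = 1 :> R by field.
by rewrite scalerN scaleNr opprK -scalerDl halves scale1r.
Qed.

Lemma hatB_eventually_eq (l l' : wop R) (v : V) :
  (exists N1 : nat, forall N, (N1 <= N)%N ->
     hatB_trunc phi bra vac l' N v = hatB_trunc phi bra vac l N v) ->
  hatB phi bra vac l' v = hatB phi bra vac l v.
Proof.
move=> [N1 trunc_eq]; rewrite /hatB; congr (epsilon _ _).
apply: functional_extensionality => w; apply: propositional_extensionality.
split=> -[N0 lim_w]; exists (maxn N0 N1) => N le_N.
  by rewrite -trunc_eq ?lim_w //; lia.
by rewrite trunc_eq ?lim_w //; lia.
Qed.

Lemma hatB_antisym (l : wop R) (v : V) :
  fock_gen phi vac v -> hatB phi bra vac (antisym l) v = hatB phi bra vac l v.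
Proof.
move=> /fock_gen_phi_eq0 [M phi_v].
apply: hatB_eventually_eq; exists (M + 2 * \max_(e <- l) `|e.1|)%N => N le_N.
exact: hatB_trunc_antisym phi_v le_N.
Qed.

End BRealization.

Theorem corollary3p5 (R : numClosedFieldType) (V : lmodType R)
  (phi : int -> {linear V -> V}) (bra : V -> R) (vac : V)
  (Hanti : forall (i j : int) (v : V),
     phi i (phi j v) + phi j (phi i v) = (if i + j == 0 then sgnz R i else 0) *: v)
  (Hvac : forall i : int, i < 0 -> phi i vac = 0)
  (Hbra_lin : forall (a : R) (u v : V), bra (a *: u + v) = a * bra u + bra v)
  (Hbra : forall (i : int) (v : V), 0 < i -> bra (phi i v) = 0)
  (Hbra1 : bra vac = 1)
  (Hbra0 : bra (phi 0 vac) = 0)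
  (Hgen : forall v : V, fock_gen phi vac v)
  (l : wop R) :
  forall (n : int) (v : V),
    hatB phi bra vac l (phi n v) - phi n (hatB phi bra vac l v)
    = hatB phi bra vac (antisym l) (phi n v) - phi n (hatB phi bra vac (antisym l) v).
Proof.
move=> n v.
by rewrite !(hatB_antisym Hanti Hvac Hbra_lin Hbra Hbra1 l (Hgen _)).
Qed.
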